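(* Let $\lambda\in\mathcal O$ be a nonzero limit ordinal and $\mathcal A,\mathcal B:\mathcal O\to\mathrm{SAT}$. Then, with $\liminf,\limsup$ computed in the lattice $\mathrm{SAT}$ of saturated sets, (a) $\limsup_{\alpha\to\lambda}(\mathcal A(\alpha)\boxplus\mathcal B(\alpha))\subseteq(\limsup_\lambda\mathcal A)\boxplus(\limsup_\lambda\mathcal B)$ and $(\liminf_\lambda\mathcal A)\boxplus(\liminf_\lambda\mathcal B)\subseteq\liminf_{\alpha\to\lambda}(\mathcal A(\alpha)\boxplus\mathcal B(\alpha))$; (b) the same two inclusions hold with $\boxtimes$ in place of $\boxplus$; (c) $\limsup_{\alpha\to\lambda}\mathcal A(\alpha)^\mu\subseteq(\limsup_\lambda\mathcal A)^\mu$ and $(\liminf_\lambda\mathcal A)^\mu\subseteq\liminf_{\alpha\to\lambda}\mathcal A(\alpha)^\mu$; (d) $\limsup_{\alpha\to\lambda}\mathcal A(\alpha)^\nu\subseteq(\limsup_\lambda\mathcal A)^\nu$ and $(\liminf_\lambda\mathcal A)^\nu\subseteq\liminf_{\alpha\to\lambda}\mathcal A(\alpha)^\nu$.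
   Context: $\mathcal O$ is the set of ordinals $\le\top_{\mathsf{ord}}$ for a fixed ordinal $\top_{\mathsf{ord}}$ ($=\beth_\omega$). For $f:\mathcal O\to\mathfrak L$ into a complete lattice and a nonzero limit $\lambda\in\mathcal O$: $\liminf_{\alpha\to\lambda}f(\alpha)=\sup_{\alpha_0<\lambda}\inf_{\alpha_0\le\alpha<\lambda}f(\alpha)$, $\limsup_{\alpha\to\lambda}f(\alpha)=\inf_{\alpha_0<\lambda}\sup_{\alpha_0\le\alpha<\lambda}f(\alpha)$. Terms: $r,s,t::=c\mid x\mid\lambda x\,t\mid r\,s$, with constants $c::=\langle\rangle\mid\mathsf{pair}\mid\mathsf{fst}\mid\mathsf{snd}\mid\mathsf{inl}\mid\mathsf{inr}\mid\mathsf{case}\mid\mathsf{in}\mid\mathsf{out}\mid\mathsf{fix}^\mu_n\mid\mathsf{fix}^\nu_n$ ($n\in\mathbb N$); $t_{1..n}$ abbreviates $t_1\dots t_n$. Evaluation frames: $e(\_)::=\_\,s\mid\mathsf{fst}\,\_\mid\mathsf{snd}\,\_\mid\mathsf{case}\,\_\mid\mathsf{out}\,\_\mid\mathsf{fix}^\mu_n\,s\,t_{1..n}\,\_$; evaluation contexts $E$ are finite (possibly empty) compositions of frames. Reduction $\longrightarrow$ is the closure under all term constructs of: $(\lambda x t)s\to[s/x]t$; $\mathsf{fst}(\mathsf{pair}\,r\,s)\to r$; $\mathsf{snd}(\mathsf{pair}\,r\,s)\to s$; $\mathsf{case}(\mathsf{inl}\,r)\to\lambda x\lambda y.x\,r$;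 $\mathsf{case}(\mathsf{inr}\,r)\to\lambda x\lambda y.y\,r$ ($x,y\notin FV(r)$); $\mathsf{out}(\mathsf{in}\,r)\to r$; $\mathsf{fix}^\mu_n\,s\,t_{1..n}(\mathsf{in}\,t)\to s(\mathsf{fix}^\mu_n s)t_{1..n}(\mathsf{in}\,t)$; $\mathsf{out}(\mathsf{fix}^\nu_n s\,t_{1..n})\to\mathsf{out}(s(\mathsf{fix}^\nu_n s)t_{1..n})$. $\mathsf S$ = strongly normalizing terms. Safe reduction $\rhd$ is the least relation closed under evaluation contexts and transitivity containing: $(\lambda x t)s\rhd[s/x]t$ if $s\in\mathsf S$; $\mathsf{fst}(\mathsf{pair}\,r\,s)\rhd r$ if $s\in\mathsf S$; $\mathsf{snd}(\mathsf{pair}\,r\,s)\rhd s$ if $r\in\mathsf S$; $\mathsf{out}(\mathsf{in}\,r)\rhd r$; $\mathsf{case}(\mathsf{inl}\,r)\rhd\lambda x\lambda y.x\,r$; $\mathsf{case}(\mathsf{inr}\,r)\rhd\lambda x\lambda y.y\,r$; $\mathsf{fix}^\mu_n s\,t_{1..n}(\mathsf{in}\,r)\rhd s(\mathsf{fix}^\mu_n s)t_{1..n}(\mathsf{in}\,r)$; $\mathsf{out}(\mathsf{fix}^\nu_n s\,t_{1..n})\rhd\mathsf{out}(s(\mathsf{fix}^\nu_n s)t_{1..n})$. For a term set $\mathcal A$: ${}^{\rhd}\mathcal A=\{t\mid t\in\mathcal A\text{ or }t\rhd t'\in\mathcal A\}$; closure $\overline{\mathcal A}={}^{\rhd}(\mathcal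 A\cup\{E(x)\mid x\text{ variable},E(x)\in\mathsf S\})$; $\mathcal N:=\overline{\emptyset}$. A set $\mathcal A$ is saturated if $\overline{\mathcal A}=\mathcal A$ and $\mathcal N\subseteq\mathcal A\subseteq\mathsf S$; $\mathrm{SAT}$ is the complete lattice of saturated sets ordered by $\subseteq$, with bottom $\mathcal N$, top $\mathsf S$, and infima/suprema of nonempty families given by intersection/union. Operations: $r\cdot\mathcal A=\{r\,s\mid s\in\mathcal A\}$, $e^{-1}\mathcal A=\{r\mid e(r)\in\mathcal A\}$; $\mathcal A\boxplus\mathcal B=\overline{\mathsf{inl}\cdot\mathcal A}\cup\overline{\mathsf{inr}\cdot\mathcal B}$; $\mathcal A\boxtimes\mathcal B=(\mathsf{fst}\,\_)^{-1}\mathcal A\cap(\mathsf{snd}\,\_)^{-1}\mathcal B$; $\mathcal A^\mu=\overline{\mathsf{in}\cdot\mathcal A}$; $\mathcal A^\nu=(\mathsf{out}\,\_)^{-1}\mathcal A$. *)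

From Stdlib Require Import Arith List.
Import ListNotations.

Inductive const : Type :=
| CUnit | CPair | CFst | CSnd | CInl | CInr | CCase | CIn | COut
| CFixMu (n : nat) | CFixNu (n : nat).

Inductive tm : Type :=
| Con (c : const)
| Var (n : nat)
| Lam (t : tm)
| App (r s : tm).

Fixpoint lift (d k : nat) (t : tm) : tm :=
  match t with
  | Con c => Con c
  | Var n => if Nat.leb k n then Var (n + d) else Var n
  | Lam t => Lam (lift d (S k) t)
  | App r s => App (lift d k r) (lift d k s)
  end.

Fixpoint subst (s : tm) (k : nat) (t : tm) : tm :=
  match t with
  | Con c => Con c
  | Var n => if Nat.eqb n k then lift k 0 s
             else if Nat.ltb k n then Var (pred n) else Var n
  | Lam t => Lam (subst s (S k) t)
  | App r1 r2 => App (subst s k r1) (subst s k r2)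
  end.

Fixpoint apps (h : tm) (l : list tm) : tm :=
  match l with
  | [] => h
  | x :: l => apps (App h x) l
  end.

(* case (inl r) -> \x\y. x r  and  case (inr r) -> \x\y. y r *)
Definition case_inl_red (r : tm) : tm := Lam (Lam (App (Var 1) (lift 2 0 r))).
Definition case_inr_red (r : tm) : tm := Lam (Lam (App (Var 0) (lift 2 0 r))).

Inductive contr : tm -> tm -> Prop :=
| contr_beta t s : contr (App (Lam t) s) (subst s 0 t)
| contr_fst r s : contr (App (Con CFst) (App (App (Con CPair) r) s)) r
| contr_snd r s : contr (App (Con CSnd) (App (App (Con CPair) r) s)) s
| contr_case_inl r : contr (App (Con CCase) (App (Con CInl) r)) (case_inl_red r)
| contr_case_inr r : contr (App (Con CCase) (App (Con CInr) r)) (case_inr_red r)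
| contr_out_in r : contr (App (Con COut) (App (Con CIn) r)) r
| contr_fixmu n s ts t : length ts = n ->
    contr (App (apps (App (Con (CFixMu n)) s) ts) (App (Con CIn) t))
          (App (apps (App s (App (Con (CFixMu n)) s)) ts) (App (Con CIn) t))
| contr_fixnu n s ts : length ts = n ->
    contr (App (Con COut) (apps (App (Con (CFixNu n)) s) ts))
          (App (Con COut) (apps (App s (App (Con (CFixNu n)) s)) ts)).

Inductive step : tm -> tm -> Prop :=
| step_contr t u : contr t u -> step t u
| step_lam t u : step t u -> step (Lam t) (Lam u)
| step_appl r r' s : step r r' -> step (App r s) (App r' s)
| step_appr r s s' : step s s' -> step (App r s) (App r s').

Definition SN (t : tm) : Prop := Acc (fun u v => step v u) t.

Inductive frame : (tm -> tm) -> Prop :=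
| fr_app s : frame (fun t => App t s)
| fr_fst : frame (fun t => App (Con CFst) t)
| fr_snd : frame (fun t => App (Con CSnd) t)
| fr_case : frame (fun t => App (Con CCase) t)
| fr_out : frame (fun t => App (Con COut) t)
| fr_fix n s ts : length ts = n ->
    frame (fun t => App (apps (App (Con (CFixMu n)) s) ts) t).

Inductive ectx : (tm -> tm) -> Prop :=
| ectx_hole : ectx (fun t => t)
| ectx_frame E e : ectx E -> frame e -> ectx (fun t => e (E t)).

Inductive safe_base : tm -> tm -> Prop :=
| sb_beta t s : SN s -> safe_base (App (Lam t) s) (subst s 0 t)
| sb_fst r s : SN s -> safe_base (App (Con CFst) (App (App (Con CPair) r) s)) r
| sb_snd r s : SN r -> safe_base (App (Con CSnd) (App (App (Con CPair) r) s)) s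
| sb_out_in r : safe_base (App (Con COut) (App (Con CIn) r)) r
| sb_case_inl r : safe_base (App (Con CCase) (App (Con CInl) r)) (case_inl_red r)
| sb_case_inr r : safe_base (App (Con CCase) (App (Con CInr) r)) (case_inr_red r)
| sb_fixmu n s ts r : length ts = n ->
    safe_base (App (apps (App (Con (CFixMu n)) s) ts) (App (Con CIn) r))
              (App (apps (App s (App (Con (CFixMu n)) s)) ts) (App (Con CIn) r))
| sb_fixnu n s ts : length ts = n ->
    safe_base (App (Con COut) (apps (App (Con (CFixNu n)) s) ts))
              (App (Con COut) (apps (App s (App (Con (CFixNu n)) s)) ts)).

Inductive safe : tm -> tm -> Prop :=
| safe_b t u : safe_base t u -> safe t u
| safe_ctx E t u : ectx E -> safe t u -> safe (E t) (E u)
| safe_trans t u v : safe t u -> safe u v -> safe t v.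

Definition tset := tm -> Prop.

Definition subset (A B : tset) : Prop := forall t, A t -> B t.

Definition pre_safe (A : tset) : tset :=
  fun t => A t \/ exists t', safe t t' /\ A t'.

Definition closure (A : tset) : tset :=
  pre_safe (fun t => A t \/
    exists E x, ectx E /\ t = E (Var x) /\ SN (E (Var x))).

Definition Nset : tset := closure (fun _ => False).

Definition saturated (A : tset) : Prop :=
  (forall t, closure A t <-> A t) /\ subset Nset A /\ subset A SN.

Definition cdot (r : tm) (A : tset) : tset := fun t => exists s, A s /\ t = App r s.
Definition preim (e : tm -> tm) (A : tset) : tset := fun r => A (e r).

Definition boxplus (A B : tset) : tset :=
  fun t => closure (cdot (Con CInl) A) t \/ closure (cdot (Con CInr) B) t.
Definition boxtimes (A B : tset) : tset :=
  fun t => preim (fun r => App (Con CFst) r) A t /\ preim (fun r => App (Con CSnd) r) B t.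
Definition mu_op (A : tset) : tset := closure (cdot (Con CIn) A).
Definition nu_op (A : tset) : tset := preim (fun r => App (Con COut) r) A.

(* Ordinals: an abstract well-ordered type (strict order lt). *)
Definition is_wellorder {O : Type} (lt : O -> O -> Prop) : Prop :=
  well_founded lt /\
  (forall a b c, lt a b -> lt b c -> lt a c) /\
  (forall a b, lt a b \/ a = b \/ lt b a).

Definition nonzero_limit {O : Type} (lt : O -> O -> Prop) (lam : O) : Prop :=
  (exists a, lt a lam) /\ (forall a, lt a lam -> exists b, lt a b /\ lt b lam).

(* liminf / limsup in SAT: sup/inf of nonempty families are union/intersection *)
Definition liminf {O : Type} (lt : O -> O -> Prop) (lam : O) (A : O -> tset) : tset :=
  fun t => exists a0, lt a0 lam /\
    forall a, (lt a0 a \/ a0 = a) -> lt a lam -> A a t.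

Definition limsup {O : Type} (lt : O -> O -> Prop) (lam : O) (A : O -> tset) : tset :=
  fun t => forall a0, lt a0 lam ->
    exists a, (lt a0 a \/ a0 = a) /\ lt a lam /\ A a t.

(* Safe reduction is contained in the iterates of a deterministic head-reduction
   function [head_step], for which [inl s], [inr s] and [in s] are normal.  So a
   term t outside [Nset] safely reduces to at most one such value, and whether t
   lies in the closure of [inl . X] is decided by that single argument s: the
   limsup of such closures over a family is the closure of the limsup at the
   fixed s.  The remaining inclusions only use that liminf and limsup commute
   with preimages and (for liminf, along a total order) with binary
   intersections. *)

From Stdlib Require Import Arith List Lia Relations Classical.
Import ListNotations.

Definition strict (c : const) : bool :=
  match c with CFst | CSnd | CCase | COut => true | _ => false end.

Definition inert (c : const) (k : nat) : Prop :=
  match c with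
  | CFst | CSnd | CCase | COut => False
  | CFixMu n => k <= S n
  | _ => True
  end.

Fixpoint spine (t : tm) : tm * list tm :=
  match t with
  | App r s => let (h, l) := spine r in (h, l ++ [s])
  | _ => (t, [])
  end.

Definition unfold_spine (h : tm) (args : list tm) : option (const * tm) :=
  match h, args with
  | Con c, s :: ts =>
      match c with
      | CFixMu n | CFixNu n =>
          if length ts =? n then Some (c, apps (App s (App (Con c) s)) ts) else None
      | _ => None
      end
  | _, _ => None
  end.

Definition fix_unfold (t : tm) : option (const * tm) :=
  let (h, args) := spine t in unfold_spine h args.

Definition contract (c : const) (s : tm) : option tm :=
  match c with
  | CFst => match s with App (App (Con CPair) r) _ => Some r | _ => None end
  | CSnd => match s with App (App (Con CPair) _) r => Some r | _ => None end
  | CCase =>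
      match s with
      | App (Con CInl) r => Some (case_inl_red r)
      | App (Con CInr) r => Some (case_inr_red r)
      | _ => None
      end
  | COut =>
      match fix_unfold s with
      | Some (CFixNu _, u) => Some (App (Con COut) u)
      | _ => match s with App (Con CIn) r => Some r | _ => None end
      end
  | _ => None
  end.

Definition fix_mu_step (r s : tm) (hs : option tm) : option tm :=
  match fix_unfold r with
  | Some (CFixMu _, u) =>
      match hs with
      | Some s' => Some (App r s')
      | None => match s with App (Con CIn) _ => Some (App u s) | _ => None end
      end
  | _ => None
  end.

(* Arguments of strict constants and of saturated fixpoints are reduced before the
   head redex is contracted, so that [head_step] commutes with evaluation frames.
   The side conditions [SN s] of safe reduction are not checked. *)
Fixpoint head_step (t : tm) : option tm :=
  match t with
  | App (Lam b) s => Some (subst s 0 b)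
  | App (Con c) s =>
      if strict c then
        match head_step s with
        | Some s' => Some (App (Con c) s')
        | None => contract c s
        end
      else None
  | App (App _ _ as r) s =>
      match head_step r with
      | Some r' => Some (App r' s)
      | None => fix_mu_step r s (head_step s)
      end
  | _ => None
  end.

Lemma apps_snoc h l x : apps h (l ++ [x]) = App (apps h l) x.
Proof. revert h; induction l as [|y l IH]; intro h; simpl; auto. Qed.

Lemma apps_App a b l : exists r1 r2, apps (App a b) l = App r1 r2.
Proof. revert a b; induction l as [|x l IH]; intros a b; simpl; eauto. Qed.

Lemma spine_apps_con c l : spine (apps (Con c) l) = (Con c, l).
Proof.
  induction l as [|x l IH] using rev_ind; [reflexivity|].
  rewrite apps_snoc; simpl; rewrite IH; reflexivity.
Qed.

Lemma fix_unfold_apps c s ts :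
  fix_unfold (apps (App (Con c) s) ts) = unfold_spine (Con c) (s :: ts).
Proof.
  unfold fix_unfold.
  now rewrite (spine_apps_con c (s :: ts) : spine (apps (App (Con c) s) ts) = _).
Qed.

Lemma head_step_App_App r1 r2 s :
  head_step (App (App r1 r2) s) =
  match head_step (App r1 r2) with
  | Some r' => Some (App r' s)
  | None => fix_mu_step (App r1 r2) s (head_step s)
  end.
Proof. reflexivity. Qed.

Lemma head_step_App_apps h x l s :
  head_step (App (apps (App h x) l) s) =
  match head_step (apps (App h x) l) with
  | Some r' => Some (App r' s)
  | None => fix_mu_step (apps (App h x) l) s (head_step s)
  end.
Proof. destruct (apps_App h x l) as [r1 [r2 ->]]; reflexivity. Qed.

Lemma inert_pred c k : inert c (S k) -> inert c k.
Proof. destruct c; simpl; auto; lia. Qed.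

Lemma head_step_apps_inert c s ts :
  inert c (S (length ts)) -> head_step (apps (App (Con c) s) ts) = None.
Proof.
  induction ts as [|x ts IH] using rev_ind; intro Hc.
  - destruct c; simpl in Hc; try contradiction; reflexivity.
  - rewrite length_app, Nat.add_comm in Hc.
    rewrite apps_snoc, head_step_App_apps, IH by exact (inert_pred _ _ Hc).
    unfold fix_mu_step; rewrite fix_unfold_apps.
    destruct c; simpl in *; try reflexivity;
      destruct (Nat.eqb_spec (length ts) n); try lia; reflexivity.
Qed.

Lemma head_step_safe_base t u : safe_base t u -> head_step t = Some u.
Proof.
  destruct 1 as [| | | | | |n s ts r Hn|n s ts Hn]; try reflexivity.
  - rewrite head_step_App_apps, head_step_apps_inert by (simpl; lia).
    unfold fix_mu_step; rewrite fix_unfold_apps; simpl.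
    rewrite Hn, Nat.eqb_refl; reflexivity.
  - simpl; rewrite head_step_apps_inert by exact I.
    simpl; rewrite fix_unfold_apps; simpl.
    rewrite Hn, Nat.eqb_refl; reflexivity.
Qed.

Lemma head_step_frame e t t' :
  frame e -> head_step t = Some t' -> head_step (e t) = Some (e t').
Proof.
  destruct 1 as [s| | | | |n s ts Hn]; intro Ht; try (simpl; rewrite Ht; reflexivity).
  - destruct t as [| | |r1 r2]; try discriminate.
    rewrite head_step_App_App, Ht; reflexivity.
  - rewrite head_step_App_apps, head_step_apps_inert by (simpl; lia).
    unfold fix_mu_step; rewrite fix_unfold_apps; simpl.
    rewrite Hn, Nat.eqb_refl, Ht; reflexivity.
Qed.

Lemma head_step_ectx E t t' :
  ectx E -> head_step t = Some t' -> head_step (E t) = Some (E t').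
Proof. induction 1; auto using head_step_frame. Qed.

Definition head_red (t u : tm) : Prop := head_step t = Some u.

Lemma safe_head_red t u : safe t u -> clos_trans tm head_red t u.
Proof.
  induction 1 as [t u Hb|E t u HE _ IH|t u v _ IHtu _ IHuv].
  - apply t_step, head_step_safe_base, Hb.
  - induction IH; [apply t_step, head_step_ectx; auto | eapply t_trans; eauto].
  - eapply t_trans; eauto.
Qed.

Lemma normal_form_unique {X : Type} (R : relation X)
  (R_fun : forall x y z, R x y -> R x z -> y = z) x y z :
  clos_refl_trans_1n X R x y -> clos_refl_trans_1n X R x z ->
  (forall w, ~ R y w) -> (forall w, ~ R z w) -> y = z.
Proof.
  intros Hy; revert z; induction Hy as [|x x' y Hx _ IH]; intros z Hz Ny Nz.
  - destruct Hz as [|z' z Hx]; [reflexivity | exfalso; exact (Ny _ Hx)].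
  - destruct Hz as [|z' z Hx' Hz]; [exfalso; exact (Nz _ Hx)|].
    apply IH; auto; rewrite (R_fun _ _ _ Hx Hx'); exact Hz.
Qed.

Definition reaches (t v : tm) : Prop := t = v \/ safe t v.

Lemma reaches_value_inj c1 c2 s1 s2 t :
  head_step (App c1 s1) = None -> head_step (App c2 s2) = None ->
  reaches t (App c1 s1) -> reaches t (App c2 s2) -> c1 = c2 /\ s1 = s2.
Proof.
  intros N1 N2 H1 H2.
  assert (Hrt : forall v, reaches t v -> clos_refl_trans_1n tm head_red t v).
  { intros v [<-|Hs]; [constructor|].
    apply clos_rt_rt1n, clos_t_clos_rt, safe_head_red, Hs. }
  assert (E : App c1 s1 = App c2 s2).
  { apply (normal_form_unique head_red) with t; auto.
    - unfold head_red; congruence.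
    - intros w Hw; unfold head_red in Hw; congruence.
    - intros w Hw; unfold head_red in Hw; congruence. }
  injection E; auto.
Qed.

Definition value_head (c : tm) : Prop := forall s, head_step (App c s) = None.

Lemma value_head_con c : strict c = false -> value_head (Con c).
Proof. intros Hc s; simpl; rewrite Hc; reflexivity. Qed.

Lemma Nset_closure X : subset Nset (closure X).
Proof.
  intros t [[[] | Ht] | [t' [Hs [[] | Ht']]]].
  - left; right; exact Ht.
  - right; exists t'; split; [exact Hs | right; exact Ht'].
Qed.

Lemma closure_cdot_inv c X t :
  closure (cdot c X) t -> Nset t \/ exists s, X s /\ reaches t (App c s).
Proof.
  intros [[[s [Hs ->]] | Hn] | [t' [Hst [[s [Hs ->]] | Hn]]]].
  - right; exists s; split; [exact Hs | left; reflexivity].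
  - left; left; right; exact Hn.
  - right; exists s; split; [exact Hs | right; exact Hst].
  - left; right; exists t'; split; [exact Hst | right; exact Hn].
Qed.

Lemma closure_cdot_intro c X t s : X s -> reaches t (App c s) -> closure (cdot c X) t.
Proof.
  intros Hs [->|Hst]; [left; left; exists s; auto|].
  right; exists (App c s); split; [exact Hst | left; exists s; auto].
Qed.

Lemma closure_cdot_value c c' X t s :
  value_head c -> value_head c' -> ~ Nset t -> reaches t (App c' s) ->
  closure (cdot c X) t -> c = c' /\ X s.
Proof.
  intros Hc Hc' Hn Hts Ht.
  destruct (closure_cdot_inv _ _ _ Ht) as [Hn'|[s' [Hs' Hts']]]; [contradiction|].
  destruct (reaches_value_inj c c' s' s t (Hc s') (Hc' s) Hts' Hts) as [-> ->].
  auto.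
Qed.

Section Limits.

Variables (O : Type) (lt : O -> O -> Prop) (lam : O).

Lemma limsup_mono (P Q : O -> tset) t s :
  (forall a, P a t -> Q a s) -> limsup lt lam P t -> limsup lt lam Q s.
Proof.
  intros HPQ H a0 Ha0; destruct (H a0 Ha0) as [a [Ha [Hal HP]]]; eauto.
Qed.

Lemma liminf_mono (P Q : O -> tset) t s :
  (forall a, P a t -> Q a s) -> liminf lt lam P t -> liminf lt lam Q s.
Proof. intros HPQ [a0 [Ha0 H]]; exists a0; split; auto. Qed.

Lemma limsup_setI (P Q : O -> tset) t :
  limsup lt lam (fun a u => P a u /\ Q a u) t -> limsup lt lam P t /\ limsup lt lam Q t.
Proof. intro H; split; revert H; apply limsup_mono; intros a [HP HQ]; assumption. Qed.

Lemma limsup_boxtimes (A B : O -> tset) :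
  subset (limsup lt lam (fun a => boxtimes (A a) (B a)))
         (boxtimes (limsup lt lam A) (limsup lt lam B)).
Proof. intros t Ht; exact (limsup_setI _ _ _ Ht). Qed.

Lemma limsup_preim e (A : O -> tset) :
  subset (limsup lt lam (fun a => preim e (A a))) (preim e (limsup lt lam A)).
Proof. intros t H; exact H. Qed.

Lemma liminf_preim e (A : O -> tset) :
  subset (preim e (liminf lt lam A)) (liminf lt lam (fun a => preim e (A a))).
Proof. intros t H; exact H. Qed.

Hypothesis lt_trans : forall a b c, lt a b -> lt b c -> lt a c.
Hypothesis lt_total : forall a b, lt a b \/ a = b \/ lt b a.

Lemma liminf_setI (P Q : O -> tset) t :
  liminf lt lam P t -> liminf lt lam Q t -> liminf lt lam (fun a u => P a u /\ Q a u) t.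
Proof.
  intros [a0 [Ha0 HP]] [b0 [Hb0 HQ]].
  assert (le_trans : forall a b c, (lt a b \/ a = b) -> (lt b c \/ b = c) -> lt a c \/ a = c)
    by (intros a b c [?|<-] [?|<-]; eauto).
  destruct (lt_total a0 b0) as [Hab|[<-|Hba]].
  - exists b0; split; [exact Hb0|]; intros a Ha Hal; split; auto.
    apply HP; [apply le_trans with b0; auto | exact Hal].
  - exists a0; split; auto.
  - exists a0; split; [exact Ha0|]; intros a Ha Hal; split; auto.
    apply HQ; [apply le_trans with a0; auto | exact Hal].
Qed.

Lemma liminf_boxtimes (A B : O -> tset) :
  subset (boxtimes (liminf lt lam A) (liminf lt lam B))
         (liminf lt lam (fun a => boxtimes (A a) (B a))).
Proof. intros t [HtA HtB]; exact (liminf_setI _ _ _ HtA HtB). Qed.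

Hypothesis lam_nonzero : exists a, lt a lam.

Lemma liminf_closure_cdot c (A : O -> tset) :
  subset (closure (cdot c (liminf lt lam A))) (liminf lt lam (fun a => closure (cdot c (A a)))).
Proof.
  intros t Ht; destruct (closure_cdot_inv _ _ _ Ht) as [Hn|[s [Hs Hts]]].
  - destruct lam_nonzero as [a0 Ha0].
    exists a0; split; [exact Ha0|]; intros; apply Nset_closure, Hn.
  - revert Hs; apply liminf_mono; intros a Has; apply closure_cdot_intro with s; auto.
Qed.

Lemma limsup_closure_cdot c (A : O -> tset) : value_head c ->
  subset (limsup lt lam (fun a => closure (cdot c (A a)))) (closure (cdot c (limsup lt lam A))).
Proof.
  intros Hc t Ht; destruct (classic (Nset t)) as [Hn|Hn]; [apply Nset_closure, Hn|].
  destruct lam_nonzero as [a0 Ha0]; destruct (Ht a0 Ha0) as [a [_ [_ Hta]]].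
  destruct (closure_cdot_inv _ _ _ Hta) as [?|[s [_ Hts]]]; [contradiction|].
  apply closure_cdot_intro with s; [|exact Hts].
  revert Ht; apply limsup_mono; intros b Htb.
  exact (proj2 (closure_cdot_value _ _ _ _ _ Hc Hc Hn Hts Htb)).
Qed.

Lemma liminf_boxplus (A B : O -> tset) :
  subset (boxplus (liminf lt lam A) (liminf lt lam B))
         (liminf lt lam (fun a => boxplus (A a) (B a))).
Proof.
  intros t [Ht|Ht]; apply liminf_closure_cdot in Ht; revert Ht;
    apply liminf_mono; intros a Ht; [left | right]; exact Ht.
Qed.

Lemma limsup_boxplus (A B : O -> tset) :
  subset (limsup lt lam (fun a => boxplus (A a) (B a)))
         (boxplus (limsup lt lam A) (limsup lt lam B)).
Proof.
  pose proof (value_head_con CInl eq_refl) as Hinl.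
  pose proof (value_head_con CInr eq_refl) as Hinr.
  intros t Ht; destruct (classic (Nset t)) as [Hn|Hn]; [left; apply Nset_closure, Hn|].
  destruct lam_nonzero as [a0 Ha0]; destruct (Ht a0 Ha0) as [a [_ [_ [Hta|Hta]]]];
    destruct (closure_cdot_inv _ _ _ Hta) as [?|[s [_ Hts]]]; try contradiction;
    [left | right]; apply closure_cdot_intro with s; auto;
    revert Ht; apply limsup_mono; intros b [Htb|Htb].
  - exact (proj2 (closure_cdot_value _ _ _ _ _ Hinl Hinl Hn Hts Htb)).
  - destruct (closure_cdot_value _ _ _ _ _ Hinr Hinl Hn Hts Htb) as [E _]; discriminate.
  - destruct (closure_cdot_value _ _ _ _ _ Hinl Hinr Hn Hts Htb) as [E _]; discriminate.
  - exact (proj2 (closure_cdot_value _ _ _ _ _ Hinr Hinr Hn Hts Htb)).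
Qed.

End Limits.

Theorem lemma4p6 (O : Type) (lt : O -> O -> Prop) (Hwo : is_wellorder lt)
  (lam : O) (Hlam : nonzero_limit lt lam)
  (A B : O -> tset) (HA : forall a, saturated (A a)) (HB : forall a, saturated (B a)) :
  (subset (limsup lt lam (fun a => boxplus (A a) (B a)))
          (boxplus (limsup lt lam A) (limsup lt lam B)) /\
   subset (boxplus (liminf lt lam A) (liminf lt lam B))
          (liminf lt lam (fun a => boxplus (A a) (B a)))) /\
  (subset (limsup lt lam (fun a => boxtimes (A a) (B a)))
          (boxtimes (limsup lt lam A) (limsup lt lam B)) /\
   subset (boxtimes (liminf lt lam A) (liminf lt lam B))
          (liminf lt lam (fun a => boxtimes (A a) (B a)))) /\
  (subset (limsup lt lam (fun a => mu_op (A a))) (mu_op (limsup lt lam A)) /\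
   subset (mu_op (liminf lt lam A)) (liminf lt lam (fun a => mu_op (A a)))) /\
  (subset (limsup lt lam (fun a => nu_op (A a))) (nu_op (limsup lt lam A)) /\
   subset (nu_op (liminf lt lam A)) (liminf lt lam (fun a => nu_op (A a)))).
Proof.
  destruct Hwo as [_ [lt_trans lt_total]]; destruct Hlam as [lam_nonzero _].
  split; [|split; [|split]]; split.
  - apply limsup_boxplus, lam_nonzero.
  - apply liminf_boxplus, lam_nonzero.
  - apply limsup_boxtimes.
  - apply liminf_boxtimes; assumption.
  - apply limsup_closure_cdot, value_head_con; [exact lam_nonzero | reflexivity].
  - apply liminf_closure_cdot, lam_nonzero.
  - apply limsup_preim.
  - apply liminf_preim.
Qed.
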